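(* Let $D$ be a strongly connected digraph containing at least one cycle, with girth $g$. Let $k$ and $p$ be integers with $k\ge g-1\ge p\ge 1$, and put $\hat k=\lceil k/p\rceil\, p$. If $D$ contains no cycle whose length is congruent to $r$ modulo $\hat k$ for any $r\in\{-p+2,-p+3,\ldots,0,\ldots,p\}$, then $\chi_A(D)\le \lceil k/p\rceil$.
   Context: Digraphs are finite and loopless; paths and cycles are directed. The girth of a digraph is the length of a shortest directed cycle. A set of vertices is acyclic if the subdigraph it induces contains no directed cycle. The dichromatic number $\chi_A(D)$ is the minimum $k$ such that $V(D)$ can be colored with $k$ colors so that every color class is acyclic. A digraph is strongly connected if for every ordered pair of distinct vertices $u,v$ there is a directed $uv$-path. *)

From HB Require Import structures.
From mathcomp Require Import all_boot all_order all_algebra.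
Set Implicit Arguments. Unset Strict Implicit. Unset Printing Implicit Defensive.

Definition loopless (V : finType) (e : rel V) : Prop := forall x, ~~ e x x.

(* A directed cycle: a nonempty duplicate-free sequence [v0; ...; v_{L-1}]
   with arcs v_i -> v_{i+1} and v_{L-1} -> v0.  Its length is size s. *)
Definition dicycle (V : finType) (e : rel V) (s : seq V) : bool :=
  [&& 0 < size s, uniq s & cycle e s].

Definition strongly_connected (V : finType) (e : rel V) : Prop :=
  forall u v : V, connect e u v.

Definition is_girth (V : finType) (e : rel V) (g : nat) : Prop :=
  (exists s, dicycle e s /\ size s = g) /\
  (forall s, dicycle e s -> g <= size s).

Definition acyclic_set (V : finType) (e : rel V) (A : {pred V}) : Prop :=
  forall s, dicycle e s -> ~ all (mem A) s.

Definition dichromatic_le (V : finType) (e : rel V) (c : nat) : Prop :=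
  exists f : V -> 'I_c, forall i : 'I_c, acyclic_set e [pred x | f x == i].

Definition ceil_div (k p : nat) : nat := (k + p.-1) %/ p.

(* Run a depth-first search through the whole digraph, recording for every
   vertex its depth [d] in the DFS forest and its position in the finishing
   order.  An arc [u -> v] with [v] finished no earlier than [u] is a back arc:
   [v] is on the DFS stack above [u], and the tree path from [v] to [u] closes a
   cycle of length [d u - d v + 1].  Colour [x] by the block of length [p] that
   contains [d x mod k^]; there are [ceil(k/p)] blocks.  On a monochromatic
   cycle, the vertex finished first has its successor finished later, so that
   arc is a back arc; the cycle it closes has length [r mod k^] with
   [r = (d u mod k^) - (d v mod k^) + 1], and [d u mod k^], [d v mod k^] lie in
   one block, so [2 - p <= r <= p], which is excluded. *)
From HB Require Import structures.
From mathcomp Require Import all_boot all_order all_algebra.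
From mathcomp Require Import zify.
Import Order.TTheory GRing.Theory Num.Theory.
Set Implicit Arguments. Unset Strict Implicit.

Section DepthFirstSearch.

Variables (V : finType) (e : rel V).

Definition closing_dicycle (n m : nat) : Prop :=
  exists2 s : seq V, dicycle e s & size s + m = n.+1.

Definition pushable (st : seq V) (v : V) : bool :=
  if st is x :: s then e (last x s) v else true.

Lemma pushable_rcons (st : seq V) (c v : V) : pushable (rcons st c) v = e c v.
Proof. by case: st => [|x s] //=; rewrite last_rcons. Qed.

Lemma sorted_rcons_pushable (st : seq V) (c : V) :
  sorted e (rcons st c) = sorted e st && pushable st c.
Proof. by case: st => [|x s] //=; rewrite rcons_path. Qed.

Lemma dicycle_drop_index (s : seq V) (v : V) :
  sorted e s -> uniq s -> v \in s -> e (last v s) v ->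
  dicycle e (drop (index v s) s).
Proof.
move=> s_sorted s_uniq vs e_back; rewrite (drop_index vs).
set t := drop (index v s).+1 s.
have s_split : s = take (index v s) s ++ v :: t by rewrite -drop_index ?cat_take_drop.
have t_last : last v t = last v s by rewrite [in RHS]s_split last_cat.
apply/and3P; split => //.
  by rewrite -(drop_index vs) drop_uniq.
rewrite /= rcons_path t_last e_back andbT.
by have := drop_sorted (index v s) s_sorted; rewrite (drop_index vs).
Qed.

(* A DFS started with the stack [st] (a path, bottom first) inside the
   unvisited set [U]: it visits [reached], assigns [depth] and a finishing
   [stamp], and every back arc, including arcs into the stack, closes a cycle. *)
Record dfs_labelling (st : seq V) (U : {set V}) := DfsLabelling {
  reached : {set V};
  depth : V -> nat;
  stamp : V -> nat;
  stamp_bound : nat;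
  reached_sub : reached \subset U;
  reached_closed : forall u v, u \in reached -> v \in U -> e u v -> v \in reached;
  pushable_reached : forall v, v \in U -> pushable st v -> v \in reached;
  stamp_lt : forall u, u \in reached -> stamp u < stamp_bound;
  back_arc_cycle : forall u v, u \in reached -> v \in reached -> e u v ->
    stamp u <= stamp v -> closing_dicycle (depth u) (depth v);
  stack_arc_cycle : forall u v, u \in reached -> v \in st -> e u v ->
    closing_dicycle (depth u) (index v st)
}.

Lemma empty_dfs_labelling (st : seq V) (U : {set V}) :
  (forall v, v \in U -> ~~ pushable st v) -> dfs_labelling st U.
Proof.
move=> no_push.
apply: (@DfsLabelling st U set0 (fun _ => 0) (fun _ => 0) 0) => [|u|v vU|u|u|u];
  rewrite ?sub0set ?inE //.
by apply: contraTT => _; exact: no_push.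
Qed.

Section Push.

Variables (st : seq V) (U : {set V}) (c : V).
Hypotheses (cU : c \in U) (stc_sorted : sorted e (rcons st c))
  (stc_uniq : uniq (rcons st c)).
Variable L1 : dfs_labelling (rcons st c) (U :\ c).
Local Notation R1 := (reached L1).
Variable L2 : dfs_labelling st (U :\: (c |: R1)).
Local Notation R2 := (reached L2).

Lemma c_notin_st : c \notin st.
Proof. by move: stc_uniq; rewrite rcons_uniq => /andP[]. Qed.

Lemma index_rcons_st v : v \in st -> index v (rcons st c) = index v st.
Proof. by move=> vs; rewrite -cats1 index_cat vs. Qed.

Lemma index_rcons_top : index c (rcons st c) = size st.
Proof. by rewrite -cats1 index_cat (negbTE c_notin_st) /= eqxx addn0. Qed.

Lemma top_arc_cycle v : v \in rcons st c -> e c v ->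
  closing_dicycle (size st) (index v (rcons st c)).
Proof.
move=> v_stc ecv; exists (drop (index v (rcons st c)) (rcons st c)).
  by apply: dicycle_drop_index => //; rewrite last_rcons.
by rewrite size_drop subnK ?index_size // size_rcons.
Qed.

Lemma R1_sub x : x \in R1 -> x \in U :\ c.
Proof. exact/subsetP/(reached_sub L1). Qed.

Lemma c_notin_R1 : c \notin R1.
Proof. by apply/negP => /R1_sub; rewrite setD11. Qed.

Lemma R2_sub x : x \in R2 -> [/\ x \in U, x != c & x \notin R1].
Proof.
move/(subsetP (reached_sub L2))/setDP => [xU].
by rewrite in_setU1 negb_or => /andP[xc xR1].
Qed.

Lemma R2_not_first x : x \in R2 -> x \notin c |: R1.
Proof. by case/R2_sub => _ xc xR1; rewrite in_setU1 negb_or xc. Qed.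

Lemma in_U_split v : v \in U -> v \in c |: R1 \/ v \in U :\: (c |: R1).
Proof.
by move=> vU; case: (boolP (v \in c |: R1)) => vR; [left | right; apply/setDP].
Qed.

Lemma first_part_closed u v : u \in c |: R1 -> v \in U -> e u v -> v \in c |: R1.
Proof.
move=> uR vU euv; case: (eqVneq v c) => [->|vc]; first exact: setU11.
apply/setU1P; right.
have vU1 : v \in U :\ c by apply/setD1P.
case/setU1P: uR => [uc|uR1]; last exact: reached_closed euv.
by apply: (pushable_reached L1 vU1); rewrite pushable_rcons -uc.
Qed.

Definition push_reached : {set V} := c |: (R1 :|: R2).

Definition push_depth (x : V) : nat :=
  if x \in R1 then depth L1 x else if x == c then size st else depth L2 x.

(* The subtree of [c] is finished before [c], the later siblings after it. *)
Definition push_stamp (x : V) : nat :=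
  if x \in R1 then stamp L1 x
  else if x == c then stamp_bound L1 else (stamp_bound L1).+1 + stamp L2 x.

Variant push_spec (x : V) : nat -> nat -> Prop :=
  | PushTop of x = c : push_spec x (size st) (stamp_bound L1)
  | PushFirst of x \in R1 : push_spec x (depth L1 x) (stamp L1 x)
  | PushSecond of x \in R2 :
      push_spec x (depth L2 x) ((stamp_bound L1).+1 + stamp L2 x).

Lemma pushP x : x \in push_reached -> push_spec x (push_depth x) (push_stamp x).
Proof.
rewrite /push_depth /push_stamp !inE => /or3P[/eqP->|xR1|xR2].
- by rewrite (negbTE c_notin_R1) eqxx; constructor.
- by rewrite xR1; constructor.
- by case: (R2_sub xR2) => _ /negbTE-> /negbTE->; constructor.
Qed.

Lemma push_reached_sub : push_reached \subset U.
Proof.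
apply/subsetP => x; rewrite !inE => /or3P[/eqP->//|/R1_sub|/R2_sub[]//].
by rewrite inE => /andP[].
Qed.

Lemma push_reached_closed u v :
  u \in push_reached -> v \in U -> e u v -> v \in push_reached.
Proof.
rewrite /push_reached setUA => uR vU euv; rewrite inE.
case/setUP: uR => [uR|uR2]; first by rewrite (first_part_closed uR vU euv).
case: (in_U_split vU) => [-> //|vU2].
by rewrite (reached_closed uR2 vU2 euv) orbT.
Qed.

Lemma push_pushable_reached v : v \in U -> pushable st v -> v \in push_reached.
Proof.
rewrite /push_reached setUA inE => vU push_v.
case: (in_U_split vU) => [-> // | vU2].
by rewrite (pushable_reached L2 vU2 push_v) orbT.
Qed.

Lemma push_stamp_lt u :
  u \in push_reached -> push_stamp u < (stamp_bound L1).+1 + stamp_bound L2.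
Proof.
case/pushP => [_|uR1|uR2]; first by rewrite ltn_addr.
  exact/ltn_addr/leqW/(stamp_lt uR1).
by rewrite ltn_add2l (stamp_lt uR2).
Qed.

Lemma no_arc_into_R2 u v : u \in c |: R1 -> v \in R2 -> ~~ e u v.
Proof.
move=> uR vR2; apply/negP => euv; case: (R2_sub vR2) => vU _ _.
by move: (first_part_closed uR vU euv); apply/negP/R2_not_first.
Qed.

Lemma push_back_arc_cycle u v : u \in push_reached -> v \in push_reached ->
  e u v -> push_stamp u <= push_stamp v ->
  closing_dicycle (push_depth u) (push_depth v).
Proof.
move=> uR vR euv; case/pushP: uR => [uc|uR1|uR2]; case/pushP: vR => [vc|vR1|vR2].
- subst u v; rewrite -{2}index_rcons_top.
  by move=> _; apply: top_arc_cycle; rewrite ?mem_rcons ?mem_head.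
- by rewrite leqNgt stamp_lt.
- by rewrite (negbTE (no_arc_into_R2 _ vR2)) ?uc ?setU11 in euv.
- move=> _; subst v; rewrite -index_rcons_top; apply: stack_arc_cycle euv => //.
  by rewrite mem_rcons mem_head.
- exact: back_arc_cycle.
- by rewrite (negbTE (no_arc_into_R2 _ vR2)) ?in_setU1 ?uR1 ?orbT in euv.
- by rewrite leqNgt ltnS leq_addr.
- by rewrite leqNgt ltn_addr // ltnS ltnW // (stamp_lt vR1).
- by rewrite leq_add2l; exact: back_arc_cycle.
Qed.

Lemma push_stack_arc_cycle u v : u \in push_reached -> v \in st -> e u v ->
  closing_dicycle (push_depth u) (index v st).
Proof.
move=> uR vs euv; have v_stc : v \in rcons st c by rewrite mem_rcons inE vs orbT.
case/pushP: uR => [uc|uR1|uR2].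
- by subst u; rewrite -index_rcons_st //; exact: top_arc_cycle.
- by rewrite -index_rcons_st //; exact: stack_arc_cycle euv.
- exact: stack_arc_cycle.
Qed.

Definition push_labelling : dfs_labelling st U :=
  DfsLabelling push_reached_sub push_reached_closed push_pushable_reached
    push_stamp_lt push_back_arc_cycle push_stack_arc_cycle.

End Push.

Lemma dfs_labelling_exists (st : seq V) (U : {set V}) :
  sorted e st -> uniq st -> all [pred y | y \notin U] st -> dfs_labelling st U.
Proof.
have [n] := ubnP #|U|; elim: n st U => // n IH st U U_card st_sorted st_uniq st_out.
have out_sub (W : {set V}) : W \subset U -> all [pred y | y \notin W] st.
  by move=> WU; apply: sub_all st_out => y /=; apply: contra; exact: (subsetP WU).
case: (pickP [pred v | (v \in U) && pushable st v]) => [c /andP[cU c_push]|none].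
  have U1_card : #|U :\ c| < n by rewrite -ltnS (cardsD1 c U) cU in U_card.
  have stc_sorted : sorted e (rcons st c) by rewrite sorted_rcons_pushable st_sorted.
  have c_notin : c \notin st by apply/negP => /(allP st_out); rewrite /= cU.
  have stc_uniq : uniq (rcons st c) by rewrite rcons_uniq c_notin.
  have L1 : dfs_labelling (rcons st c) (U :\ c).
    by apply: IH; rewrite // all_rcons !inE eqxx out_sub ?subD1set.
  apply: (push_labelling cU stc_sorted stc_uniq (L1 := L1)); apply: IH => //.
    apply: leq_ltn_trans U1_card; apply/subset_leq_card/setDS.
    by rewrite sub1set setU11.
  exact/out_sub/subsetDl.
apply: empty_dfs_labelling => v vU; apply/negP => push_v.
by move: (none v); rewrite /= vU push_v.
Qed.

Lemma dfs_depth_stamp : exists (depth stamp : V -> nat), forall u v,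
  e u v -> stamp u <= stamp v -> closing_dicycle (depth u) (depth v).
Proof.
have L : dfs_labelling [::] [set: V] by apply: dfs_labelling_exists.
have all_reached x : x \in reached L by apply: pushable_reached; rewrite ?inE.
by exists (depth L), (stamp L) => u v; apply: back_arc_cycle; rewrite ?all_reached.
Qed.

Lemma dicycle_ascent (w : V -> nat) (s : seq V) : dicycle e s ->
  exists u v, [/\ u \in s, v \in s, e u v & w u <= w v].
Proof.
case: s => [|a s] /and3P[// _ _ s_cycle].
have [u us u_min] := arg_minnP w (mem_head a s).
have next_in : next (a :: s) u \in a :: s by rewrite mem_next.
exists u, (next (a :: s) u); split => //; first exact: next_cycle s_cycle us.
exact: u_min.
Qed.

End DepthFirstSearch.

Lemma same_divn_lt (p x y : nat) : 0 < p -> x %/ p = y %/ p -> x < y + p.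
Proof.
move=> p_pos same_q; rewrite (divn_eq x p) (divn_eq y p) same_q -addnA ltn_add2l.
by rewrite ltn_addl // ltn_pmod.
Qed.

Lemma residue_window (m p a b n : nat) : 0 < p ->
  (a %% m) %/ p = (b %% m) %/ p -> n + b = a.+1 ->
  exists r : int, [/\ (2%:Z - p%:Z <= r)%R, (r <= p%:Z)%R & (n%:Z = r %[mod m%:Z])%Z].
Proof.
move=> p_pos same_block n_len.
have ab_lt := same_divn_lt p_pos same_block.
have ba_lt := same_divn_lt p_pos (esym same_block).
exists ((a %% m)%N%:Z - (b %% m)%N%:Z + 1)%R; split; try lia.
have -> : (n%:Z = ((a %/ m)%N%:Z - (b %/ m)%N%:Z) * m%:Z
                  + ((a %% m)%N%:Z - (b %% m)%N%:Z + 1))%R.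
  have := divn_eq a m; have := divn_eq b m.
  rewrite mulrBl -!PoszM; lia.
by rewrite modzMDl.
Qed.

Theorem theorem2 (V : finType) (e : rel V) (g k p : nat) :
  loopless e ->
  strongly_connected e ->
  is_girth e g ->
  (p <= g.-1 <= k)%N -> (1 <= p)%N ->
  (forall s : seq V, dicycle e s ->
     forall r : int, (2%:Z - p%:Z <= r)%R -> (r <= p%:Z)%R ->
       ~ ((size s)%:Z = r %[mod ((ceil_div k p * p)%N)%:Z])%Z) ->
  dichromatic_le e (ceil_div k p).
Proof.
move=> _ _ _ /andP[p_le_g g_le_k] p_pos no_cycle.
set K := ceil_div k p.
have K_pos : 0 < K by rewrite /K /ceil_div divn_gt0 //; lia.
have [depth [stamp back]] := dfs_depth_stamp e.
have block_lt x : (depth x %% (K * p)) %/ p < K.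
  by rewrite ltn_divLR // ltn_pmod // muln_gt0 K_pos.
exists (fun x => Ordinal (block_lt x)) => i s s_cycle s_mono.
have [u [v [us vs euv stamp_uv]]] := dicycle_ascent stamp s_cycle.
have [s' s'_cycle s'_size] := back u v euv stamp_uv.
have same_block : (depth u %% (K * p)) %/ p = (depth v %% (K * p)) %/ p.
  move: (allP s_mono u us) (allP s_mono v vs); rewrite !inE => /eqP/(congr1 val) /= ->.
  by move=> /eqP/(congr1 val).
have [r [r_lo r_hi r_mod]] := residue_window p_pos same_block s'_size.
exact: no_cycle s'_cycle r r_lo r_hi r_mod.
Qed.
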